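(* Let $N$ be a semi-directed network on leaf set $X$ with $|X|\ge4$ and let $\{x,y\}\subseteq X$. Then $$\widetilde d_N(x,y)=\frac1{\mu(N)}\sum_{T\in\mathcal T(N)}\mu(T,N)\cdot d_T(x,y).$$
   Context: A (binary) rooted phylogenetic network on $X$ is a rooted DAG whose root has in-degree 0, out-degree 2, whose leaves (in-degree 1, out-degree 0) are bijectively labeled by $X$, and whose other nodes have (in,out)-degree $(1,2)$ or $(2,1)$ (hybrid nodes), the root being the least stable ancestor of $X$. Edges into hybrid nodes are hybrid edges. A semi-directed network is obtained by undirecting all non-hybrid edges and suppressing the root. A phylogenetic tree is a semi-directed network without hybrid nodes. $T$ is displayed by $N$ if obtained by deleting exactly one hybrid edge per hybrid node, then repeatedly deleting unlabeled leaves and suppressing degree-2 nodes; $\mathcal T(N)$ is the set of displayed trees, $\mu(T,N)$ the number of choices of deleted hybrid edges yielding $T$, and $\mu(N)=\sum_T\mu(T,N)$. For $Y\subseteq X$, $N|_Y$ is the union of all up-down paths between leaves of $Y$ (paths that from one end first go only against edge directions then only along them, undirected edges usable both ways), with degree-2 nodes suppressed; $N|_{xyzw}=N|_{\{x,y,z,w\}}$ (for trees, the induced subtree). For a quartet tree $T$ on $\{x,y,z,w\}$, $\rho_{xy}(T)=0$ if $T$ has split $\{x,y\}|\{z,w\}$, else $1$; for a network $M$ on four leaves, $\widetilde\rho_{xy}(M)=\frac1{\mu(M)}\sum_{T\in\mathcal T(M)}\mu(T,M)\rho_{xy}(T)$. With $n=|X|$: the quartet metric of a tree $T$ on $X$ is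 $d_T(x,y)=\sum_{\{z,w\}}2\rho_{xy}(T|_{xyzw})+2n-4$ and the displayed quartet metric of $N$ is $\widetilde d_N(x,y)=\sum_{\{z,w\}}2\widetilde\rho_{xy}(N|_{xyzw})+2n-4$ for $x\ne y$ (sums over 2-element subsets $\{z,w\}\subseteq X\setminus\{x,y\}$), with $d_T(x,x)=\widetilde d_N(x,x)=0$. *)

From HB Require Import structures.
From mathcomp Require Import all_boot all_order all_algebra.
From mathcomp Require Import boolp.
Set Implicit Arguments. Unset Strict Implicit. Unset Printing Implicit Defensive.
Import Order.TTheory GRing.Theory Num.Theory.
Local Open Scope ring_scope.

(* A rooted binary phylogenetic network on leaf set X is given by a finite
   node type V, a directed edge relation E, a leaf labelling lab : X -> V
   and a root r.  The semi-directed network N obtained from it (non-hybrid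
   edges undirected, root suppressed) is handled directly on this data: the
   root only ever occurs as an interior vertex (of degree 2) of paths, and
   only hybrid edges (edges into hybrid nodes) carry a direction.            *)

Section Defs.
Variables (X V : finType) (E : rel V) (lab : X -> V) (r : V).

Definition indeg (B : rel V) (v : V) : nat := #|[set u | B u v]|.
Definition outdeg (B : rel V) (v : V) : nat := #|[set w | B v w]|.

Definition hyb (B : rel V) (v : V) : bool := indeg B v == 2%N.

Definition is_rooted_network : Prop :=
  [/\
      (forall u v, E u v -> ~~ connect E v u),
      indeg E r = 0%N /\ outdeg E r = 2%N,
      injective lab /\
      (forall v, (v \in codom lab) = (indeg E v == 1%N) && (outdeg E v == 0%N)),
      (forall v, v != r -> v \notin codom lab ->
         ((indeg E v == 1%N) && (outdeg E v == 2%N)) ||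
         ((indeg E v == 2%N) && (outdeg E v == 1%N)))
    & (* the root is the least stable ancestor of X: no node other than the
         root lies on all directed root-to-leaf paths *)
      (forall v, v != r ->
         exists x, connect [rel a b | E a b && (b != v)] r (lab x))].

Definition steps (p : seq V) : seq (V * V) := zip p (behead p).

Definition along (e : V * V) : bool := E e.1 e.2 && hyb E e.2.
Definition against (e : V * V) : bool := E e.2 e.1 && hyb E e.1.

(* up-down path of the semi-directed network between two leaves of Y:
   first only against edge directions, then only along them *)
Definition updown_path (Y : {set X}) (p : seq V) : Prop :=
  [/\ uniq p, (1 < size p)%N,
      (head r p \in lab @: Y) && (last r p \in lab @: Y),
      all (fun e => E e.1 e.2 || E e.2 e.1) (steps p)
    & forall i j, (i < j)%N -> (j < size (steps p))%N ->
        ~~ (along (nth (r, r) (steps p) i) && against (nth (r, r) (steps p) j))].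

(* edge relation of N|_Y : edges lying on some up-down path between leaves of Y *)
Definition resE (Y : {set X}) : rel V := fun u v =>
  `[< E u v /\ exists p, updown_path Y p /\
        ((u, v) \in steps p \/ (v, u) \in steps p) >].

(* choices of one deleted hybrid edge per hybrid node: f h is the parent of h
   whose edge into h is deleted (f v = v for non-hybrid v) *)
Definition choices (B : rel V) : {set {ffun V -> V}} :=
  [set f : {ffun V -> V} | [forall v, if hyb B v then B (f v) v else f v == v]].

Definition mu (B : rel V) : nat := #|choices B|.

(* the (undirected) graph of the displayed tree for the choice f, before
   deleting unlabelled leaves and suppressing degree-2 nodes *)
Definition kept (B : rel V) (f : {ffun V -> V}) : rel V := fun u v =>
  B u v && ~~ (hyb B v && (f v == u)).
Definition adj (B : rel V) (f : {ffun V -> V}) : rel V := fun u v =>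
  kept B f u v || kept B f v u.
Definition cut (B : rel V) (f : {ffun V -> V}) (a b : V) : rel V := fun u v =>
  adj B f u v && ~~ (((u == a) && (v == b)) || ((u == b) && (v == a))).

(* the quartet restriction of the displayed tree to x,y and S = {z,w} has the
   split {x,y}|{z,w}: some edge separates {x,y} from {z,w} *)
Definition has_split (B : rel V) (f : {ffun V -> V}) (x y : X) (S : {set X}) : bool :=
  [exists a, exists b,
    [&& kept B f a b,
        connect (cut B f a b) (lab x) (lab y),
        [forall z in S, forall w in S, connect (cut B f a b) (lab z) (lab w)] &
        [forall z in S, ~~ connect (cut B f a b) (lab x) (lab z)]]].

Definition rho (B : rel V) (f : {ffun V -> V}) (x y : X) (S : {set X}) : rat :=
  if has_split B f x y S then 0 else 1.

Definition pairs_off (x y : X) (S : {set X}) : bool :=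
  [&& #|S| == 2%N, x \notin S & y \notin S].

Definition dT (f : {ffun V -> V}) (x y : X) : rat :=
  if x == y then 0 else
  (\sum_(S : {set X} | pairs_off x y S) (2 * rho E f x y S))
  + ((2 * #|X|)%:R - 4).

Definition rho_tilde (x y : X) (S : {set X}) : rat :=
  let B := resE (x |: (y |: S)) in
  (mu B)%:R^-1 * (\sum_(g in choices B) rho B g x y S).

Definition dN (x y : X) : rat :=
  if x == y then 0 else
  (\sum_(S : {set X} | pairs_off x y S) (2 * rho_tilde x y S))
  + ((2 * #|X|)%:R - 4).

End Defs.

From HB Require Import structures.
From mathcomp Require Import all_boot all_order all_algebra.
From mathcomp Require Import boolp.
Import GRing.Theory Num.Theory.
Set Implicit Arguments. Unset Strict Implicit. Unset Printing Implicit Defensive.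

(* Both metrics are affine in the quartet values, so it suffices to compare,
   for each quartet Y = {x,y,z,w}, the mean of rho_xy(T_f|Y) over the choices
   f of deleted hybrid edges of N with the mean of rho_xy(T_g) over the
   choices g of N|_Y.  The kept edges of f form an out-tree rooted at r; let L
   be the lowest common ancestor of Y in it.  Whether {x,y}|{z,w} is a split is
   decided by the clades of the edges below L, and each such edge leading to Y
   lies on an up-down path between two leaves of Y (up to L, then down into
   another child of L), so it is an edge of N|_Y and is kept by the restriction
   g of f to the hybrid nodes of N|_Y.  Hence rho_xy(T_f|Y) = rho_xy(T_g), and
   since restriction has fibres of equal size, the two means agree. *)

Section Reachability.
Variable V : finType.
Implicit Types (e : rel V) (x y u v w : V).

Lemma connect_ind e x (P : V -> Prop) :
  P x -> (forall u v, connect e x u -> e u v -> P u -> P v) ->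
  forall y, connect e x y -> P y.
Proof.
move=> Px IH y /connectP [p xp ->]; elim/last_ind: p xp => [//|p z IHp].
rewrite rcons_path last_rcons => /andP [xp ez].
by apply: (IH (last x p)) => //; [apply/connectP; exists p | exact: IHp].
Qed.

Lemma connect_sub_between e (e' : rel V) x y :
  connect e x y ->
  (forall u v, connect e x u -> e u v -> connect e v y -> e' u v) ->
  connect e' x y.
Proof.
move=> /connectP [p]; elim: p x => [|z p IHp] x /=; first by move=> _ ->.
move=> /andP [exz zp] yl e'e.
have ezy : connect e z y by apply/connectP; exists p.
apply: connect_trans (connect1 (e'e x z (connect0 _ _) exz ezy)) _.
apply: IHp => // u v zu; apply: e'e; exact: connect_trans (connect1 exz) zu.
Qed.

Lemma connect_first_step e x y :
  connect e x y -> y != x -> exists2 c, e x c & connect e c y.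
Proof.
move=> /connectP [[|c p]] /=; first by move=> _ ->; rewrite eqxx.
by move=> /andP [exc cp] -> _; exists c => //; apply/connectP; exists p.
Qed.

Lemma connect_last_step e x y :
  connect e x y -> y != x -> exists2 u, connect e x u & e u y.
Proof.
move=> /connectP [p]; elim/last_ind: p => [|p z _] /=; first by move=> _ ->; rewrite eqxx.
rewrite rcons_path last_rcons => /andP [xp ez] -> _.
by exists (last x p) => //; apply/connectP; exists p.
Qed.

Lemma subrel_connect e (e' : rel V) : subrel e e' -> subrel (connect e) (connect e').
Proof. by move=> ee'; apply: connect_sub => u v /ee'/connect1. Qed.

Lemma path_connect_last e x p w : path e x p -> w \in p -> connect e w (last x p).
Proof.
elim: p x => [|z p IHp] x //= /andP [exz zp]; rewrite inE => /orP [/eqP ->|wp].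
  exact: path_connect zp _ (mem_last z p).
exact: IHp.
Qed.

Definition acyclic e := forall u v, e u v -> ~~ connect e v u.

Lemma acyclic_connect_antisym e u v :
  acyclic e -> connect e u v -> connect e v u -> u = v.
Proof.
move=> e_ac uv vu; apply/eqP; apply: contraT; rewrite eq_sym => nvu.
have [w uw ewv] := connect_last_step uv nvu.
by move: (e_ac _ _ ewv); rewrite (connect_trans vu uw).
Qed.

Lemma acyclic_sub e (e' : rel V) : acyclic e' -> subrel e e' -> acyclic e.
Proof.
move=> e'_ac ee' u v /ee' e'uv; apply: contraNN (e'_ac _ _ e'uv).
exact: subrel_connect.
Qed.

Lemma acyclic_path_uniq e x p : acyclic e -> path e x p -> uniq (x :: p).
Proof.
move=> e_ac; elim: p x => [|z p IHp] x //= /andP [exz zp].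
rewrite inE negb_or -andbA; apply/and3P; split; last exact: IHp.
  by apply: contraNneq (e_ac _ _ exz) => <-.
by apply: contraNN (e_ac _ _ exz) => xp; apply: (path_connect zp); rewrite inE xp orbT.
Qed.

Lemma acyclic_rev e : acyclic e -> acyclic [rel u v | e v u].
Proof. by move=> e_ac u v /= evu; rewrite connect_rev /=; exact: e_ac. Qed.

Definition parent_unique e := forall u u' v, e u v -> e u' v -> u = u'.

Definition edge_cut e a b : rel V := fun u v =>
  (e u v || e v u) && ~~ (((u == a) && (v == b)) || ((u == b) && (v == a))).

Lemma edge_cut_sym e a b : connect_sym (edge_cut e a b).
Proof.
apply: sym_connect_sym => u v; rewrite /edge_cut orbC.
by case: (u == a); case: (u == b); case: (v == a); case: (v == b).
Qed.

Section Forest.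
Variable K : rel V.
Hypotheses (K_pu : parent_unique K) (K_acyclic : acyclic K).

Lemma connect_parent b u v : connect K b v -> K u v -> v != b -> connect K b u.
Proof.
by move=> bv Kuv nvb; have [w bw Kwv] := connect_last_step bv nvb; rewrite (K_pu Kuv Kwv).
Qed.

Lemma connect_comparable u v s :
  connect K u s -> connect K v s -> connect K u v \/ connect K v u.
Proof.
move=> us; move: s us; apply: connect_ind => [vu|s' s us' Ks's IH vs]; first by right.
have [<-|nsv] := eqVneq s v.
  by left; exact: connect_trans us' (connect1 Ks's).
by apply: IH; exact: connect_parent vs Ks's nsv.
Qed.

Lemma connect_from_child L c s q : K L c -> connect K c s ->
  connect K L q -> q != L -> connect K q s -> connect K c q.
Proof.
move=> KLc cs Lq nqL qs; have [//|qc] := connect_comparable cs qs.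
have [<-//|nqc] := eqVneq q c.
have qL : connect K q L by apply: connect_parent qc KLc _; rewrite eq_sym.
by move: nqL; rewrite (acyclic_connect_antisym K_acyclic qL Lq) eqxx.
Qed.

Lemma connect_edge_other a b u v : K a b -> K u v -> ~~ ((u == a) && (v == b)) ->
  connect K b u = connect K b v.
Proof.
move=> Kab Kuv nab; apply/idP/idP => [bu|bv]; first exact: connect_trans bu (connect1 Kuv).
have [evb|nvb] := eqVneq v b; last exact: connect_parent bv Kuv nvb.
by subst v; move: nab; rewrite (K_pu Kuv Kab) !eqxx.
Qed.

Lemma edge_cut_closed a b : K a b -> closed (edge_cut K a b) (connect K b).
Proof.
move=> Kab u v /andP [/orP [Kuv|Kvu]]; rewrite negb_or => /andP [nab nba].
  exact: (connect_edge_other Kab Kuv nab).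
by rewrite andbC in nba; exact: esym (connect_edge_other Kab Kvu nba).
Qed.

Lemma edge_cut_of_edge a b u v : K a b -> K u v -> v != b -> edge_cut K a b u v.
Proof.
move=> Kab Kuv nvb; rewrite /edge_cut Kuv (negbTE nvb) andbF /=.
apply/negP => /andP [/eqP eub /eqP eva]; subst u v.
by move: (K_acyclic Kab); rewrite (connect1 Kuv).
Qed.

Lemma connect_edge_cut a b m s t : K a b -> connect K m s -> connect K m t ->
  connect (edge_cut K a b) s t = (connect K b s == connect K b t).
Proof.
move=> Kab ms mt; apply/idP/eqP => [st|bst].
  exact: (closed_connect (edge_cut_closed Kab) st).
have cut_path w z : connect K w z ->
    (forall u v, connect K w u -> K u v -> connect K v z -> v != b) ->
    connect (edge_cut K a b) w z.
  move=> wz nb; apply: (connect_sub_between wz) => u v wu Kuv vz.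
  exact: edge_cut_of_edge Kab Kuv (nb u v wu Kuv vz).
have [bs|nbs] := boolP (connect K b s).
  have bt : connect K b t by rewrite -bst.
  have below_b z : connect K b z -> connect (edge_cut K a b) b z.
    move=> bz; apply: (cut_path _ _ bz) => u v bu Kuv _; apply: contraNneq (K_acyclic Kuv).
    by move=> ->.
  by apply: connect_trans (below_b t bt); rewrite edge_cut_sym; exact: below_b.
have nbt : ~~ connect K b t by rewrite -bst.
have off_b z : connect K m z -> ~~ connect K b z -> connect (edge_cut K a b) m z.
  by move=> mz nbz; apply: (cut_path _ _ mz) => u v _ _ vz; apply: contraNneq nbz => <-.
by apply: connect_trans (off_b t mt nbt); rewrite edge_cut_sym; exact: off_b.
Qed.

End Forest.

End Reachability.

Section QuartetSplit.
Variables (X V : finType) (lab : X -> V) (x y : X) (S Y : {set X}).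

Definition separated_by (R : rel X) : bool :=
  [&& R x y, [forall z in S, forall w in S, R z w] & [forall z in S, ~~ R x z]].

Definition splits (K : rel V) : bool :=
  [exists a, exists b,
    K a b && separated_by (fun s t => connect (edge_cut K a b) (lab s) (lab t))].

Lemma has_splitE (B : rel V) f : has_split lab B f x y S = splits (kept B f).
Proof. by []. Qed.

Definition separates (P : pred X) : bool := separated_by (fun s t => P s == P t).

Hypotheses (xY : x \in Y) (yY : y \in Y) (SY : S \subset Y).

Lemma eq_separated_by R1 R2 : {in Y &, R1 =2 R2} -> separated_by R1 = separated_by R2.
Proof.
move=> R12; have SY' := subsetP SY.
rewrite /separated_by (R12 x y) //; congr [&& _, _ & _]; apply: eq_forallb_in => z zS.
  by apply: eq_forallb_in => w wS; rewrite (R12 z w (SY' z zS) (SY' w wS)).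
by rewrite (R12 x z xY (SY' z zS)).
Qed.

Lemma eq_separates P1 P2 : {in Y, P1 =1 P2} -> separates P1 = separates P2.
Proof. by move=> P12; apply: eq_separated_by => s t sY tY; rewrite /= !P12. Qed.

Lemma separatesP P z0 : z0 \in S -> separates P ->
  exists s0 s1, [/\ s0 \in Y, s1 \in Y, P s0 & ~~ P s1].
Proof.
move=> z0S /and3P [_ _ /forall_inP /(_ z0 z0S)].
have z0Y := subsetP SY _ z0S.
by case Px : (P x); case Pz0 : (P z0) => // _;
  [exists x, z0 | exists z0, x]; rewrite ?Px ?Pz0.
Qed.

Section Clades.
Variables (K : rel V) (L : V).
Hypotheses (K_pu : parent_unique K) (K_acyclic : acyclic K)
  (LY : forall s, s \in Y -> connect K L (lab s)).

Lemma splitsE :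
  splits K = [exists a, exists b, K a b && separates (fun s => connect K b (lab s))].
Proof.
apply: eq_existsb => a; apply: eq_existsb => b; case Kab : (K a b) => //=.
apply: eq_separated_by => s t sY tY.
by rewrite /= (connect_edge_cut K_pu K_acyclic Kab (LY sY) (LY tY)).
Qed.

Lemma separating_edge_below b s0 s1 : s0 \in Y -> s1 \in Y ->
  connect K b (lab s0) -> ~~ connect K b (lab s1) -> b != L /\ connect K L b.
Proof.
move=> s0Y s1Y bs0 nbs1.
have [bL|//] := connect_comparable K_pu bs0 (LY s0Y); last first.
  split=> //; apply: contraNneq nbs1 => ->; exact: LY.
by move: nbs1; rewrite (connect_trans bL (LY s1Y)).
Qed.

End Clades.

(* [K2] need not be contained in [K1]: it may keep a hybrid edge of [E] that
   [K1] deletes, which is why [connect_transfer_back] needs its own argument. *)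
Section Transfer.
Variables (E K1 K2 : rel V) (L : V).
Hypotheses (E_acyclic : acyclic E) (K1E : subrel K1 E) (K2E : subrel K2 E)
  (K1_pu : parent_unique K1) (K2_pu : parent_unique K2)
  (LY : forall s, s \in Y -> connect K1 L (lab s))
  (K12 : forall u v, v != L -> connect K1 L v ->
     (exists2 s, s \in Y & connect K1 v (lab s)) -> K1 u v -> K2 u v).

Let K1_acyclic := acyclic_sub E_acyclic K1E.
Let K2_acyclic := acyclic_sub E_acyclic K2E.

Lemma connect_transfer p q : connect K1 L p -> connect K1 p q ->
  (exists2 s, s \in Y & connect K1 q (lab s)) -> connect K2 p q.
Proof.
move=> Lp pq [s sY qs]; apply: (connect_sub_between pq) => u v pu K1uv vq.
have Lv := connect_trans (connect_trans Lp pu) (connect1 K1uv).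
apply: (K12 _ Lv _ K1uv); last by exists s => //; exact: connect_trans vq qs.
apply: contraNneq (K1_acyclic K1uv) => evL.
by rewrite -evL in Lp; exact: connect_trans Lp pu.
Qed.

Lemma connect_transfer_root s : s \in Y -> connect K2 L (lab s).
Proof. by move=> sY; apply: (connect_transfer (connect0 _ _) (LY sY)); exists s. Qed.

Lemma connect_transfer_back b s : b != L -> connect K2 L b -> s \in Y ->
  connect K2 b (lab s) -> connect K1 b (lab s).
Proof.
move=> nbL K2Lb sY K2bs.
suff up_to_b : forall t, connect K1 L t ->
    connect K1 t (lab s) -> connect K2 b t -> connect K1 b t.
  exact: up_to_b (LY sY) (connect0 _ _) K2bs.
apply: connect_ind => [_ K2bL|u v Lu K1uv IH vs K2bv].
  by move: nbL; rewrite (acyclic_connect_antisym K2_acyclic K2bL K2Lb) eqxx.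
have [->//|nvb] := eqVneq v b.
have K2uv : K2 u v.
  apply: (K12 _ (connect_trans Lu (connect1 K1uv)) _ K1uv); last by exists s.
  by apply: contraNneq (K1_acyclic K1uv) => ->.
have K1bu := IH (connect_trans (connect1 K1uv) vs) (connect_parent K2_pu K2bv K2uv nvb).
exact: connect_trans K1bu (connect1 K1uv).
Qed.

Lemma eq_clade_transfer b s0 : b != L -> connect K1 L b -> s0 \in Y ->
  connect K1 b (lab s0) ->
  {in Y, (fun s => connect K1 b (lab s)) =1 (fun s => connect K2 b (lab s))}.
Proof.
move=> nbL K1Lb s0Y bs0 s sY /=.
have K2Lb : connect K2 L b by apply: (connect_transfer (connect0 _ _) K1Lb); exists s0.
apply/idP/idP => [bs|]; last exact: connect_transfer_back.
by apply: (connect_transfer K1Lb bs); exists s.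
Qed.

Lemma splits_transfer z0 : z0 \in S -> splits K1 = splits K2.
Proof.
move=> z0S; rewrite (splitsE K1_pu K1_acyclic LY).
rewrite (splitsE K2_pu K2_acyclic connect_transfer_root).
apply/existsP/existsP => -[a /existsP [b /andP [Kab sep]]].
all: exists a; apply/existsP; exists b.
  have [s0 [s1 [s0Y s1Y bs0 nbs1]]] := separatesP z0S sep.
  have [nbL K1Lb] := separating_edge_below K1_pu LY s0Y s1Y bs0 nbs1.
  rewrite -(eq_separates (eq_clade_transfer nbL K1Lb s0Y bs0)) sep andbT.
  by apply: (K12 nbL _ _ Kab) => //; exists s0.
have [s0 [s1 [s0Y s1Y bs0 nbs1]]] := separatesP z0S sep.
have [nbL K2Lb] := separating_edge_below K2_pu connect_transfer_root s0Y s1Y bs0 nbs1.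
have K1bs0 := connect_transfer_back nbL K2Lb s0Y bs0.
have K1Lb : connect K1 L b.
  have [K1bL|//] := connect_comparable K1_pu K1bs0 (LY s0Y).
  have EbL := subrel_connect K1E K1bL; have ELb := subrel_connect K2E K2Lb.
  by move: nbL; rewrite (acyclic_connect_antisym E_acyclic EbL ELb) eqxx.
rewrite (eq_separates (eq_clade_transfer nbL K1Lb s0Y K1bs0)) sep andbT.
have [a' K1La' K1a'b] := connect_last_step K1Lb nbL.
have K2a'b : K2 a' b by apply: (K12 nbL K1Lb _ K1a'b); exists s0.
by rewrite (K2_pu K2a'b Kab) in K1a'b.
Qed.

End Transfer.
End QuartetSplit.

Section Choices.
Variable V : finType.
Implicit Types (B : rel V) (f g : {ffun V -> V}).

Lemma choicesP B g : g \in choices B ->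
  forall v, if hyb B v then B (g v) v else g v == v.
Proof. by rewrite inE => /forallP. Qed.

Lemma exists_choice B : exists g, g \in choices B.
Proof.
exists [ffun v => if hyb B v then odflt v [pick u | B u v] else v].
rewrite inE; apply/forallP => v; rewrite ffunE; case: (boolP (hyb B v)) => // /eqP hv.
case: pickP => [p //|noparent]; have : 0 < indeg B v by rewrite hv.
by case/card_gt0P => w; rewrite inE noparent.
Qed.

Lemma kept_subrel B g : subrel (kept B g) B.
Proof. by move=> u v /andP []. Qed.

Lemma kept_parent_unique B g : (forall v, indeg B v <= 2) -> g \in choices B ->
  parent_unique (kept B g).
Proof.
move=> B_le2 gB u u' v /andP [Buv ngu] /andP [Bu'v ngu']; apply/eqP; apply: contraT => nuu'.
have uu'v : [set u; u'] \subset [set w | B w v].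
  by apply/subsetP => w; rewrite !inE => /orP [] /eqP ->.
have hv : hyb B v.
  rewrite /hyb eqn_leq B_le2 /=.
  by apply: leq_trans (subset_leq_card uu'v); rewrite cards2 nuu'.
have := choicesP gB v; rewrite hv => Bgv; rewrite hv /= in ngu ngu'.
have gu'v : g v |: [set u; u'] \subset [set w | B w v].
  by rewrite subUset uu'v andbT sub1set inE.
have := leq_trans (subset_leq_card gu'v) (B_le2 v).
by rewrite cardsU1 cards2 nuu' !inE negb_or ngu ngu'.
Qed.

Lemma steps_cat x (A D : seq V) :
  steps (x :: A ++ D) = steps (x :: A) ++ steps (last x A :: D).
Proof. by elim: A x => [|z A IHA] x //=; rewrite /steps /= in IHA *; rewrite IHA. Qed.

Lemma steps_path (e : rel V) x (A : seq V) :
  all (fun p => e p.1 p.2) (steps (x :: A)) = path e x A.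
Proof. by elim: A x => [|z A IHA] x //=; rewrite /steps /= in IHA *; rewrite IHA. Qed.

End Choices.

Section Network.
Variables (X V : finType) (E : rel V) (lab : X -> V) (r : V).
Hypotheses (E_acyclic : acyclic E) (E_indeg_le2 : forall v, indeg E v <= 2)
  (E_indeg_gt0 : forall v, v != r -> 0 < indeg E v).
Implicit Types (B : rel V) (f : {ffun V -> V}) (Y : {set X}).

Lemma indeg_subrel B v : subrel B E -> indeg B v <= indeg E v.
Proof. by move=> BE; apply: subset_leq_card; apply/subsetP => u; rewrite !inE => /BE. Qed.

Lemma hyb_subrel B v : subrel B E -> hyb B v -> hyb E v.
Proof. by move=> BE /eqP hBv; rewrite /hyb eqn_leq E_indeg_le2 -hBv indeg_subrel. Qed.

Lemma hyb_subrel_parent B u v : subrel B E -> hyb B v -> E u v -> B u v.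
Proof.
move=> BE hBv Euv.
have BvE : [set w | B w v] \subset [set w | E w v].
  by apply/subsetP => w; rewrite !inE => /BE.
have card_eq : #|[set w | B w v]| = #|[set w | E w v]|.
  by move: hBv (hyb_subrel BE hBv); rewrite /hyb /indeg => /eqP -> /eqP ->.
by move: (subset_cardP card_eq BvE u); rewrite !inE Euv.
Qed.

Lemma kept_parent f v : f \in choices E -> v != r -> exists u, kept E f u v.
Proof.
move=> fE nvr; have := choicesP fE v; case: (boolP (hyb E v)) => [hv Efv|nhv _].
  move: hv; rewrite /hyb /indeg => /eqP hv.
  have /card_gt1P [p1 [p2 [+ + np]]] : 1 < #|[set w | E w v]| by rewrite hv.
  rewrite !inE => Ep1 Ep2; rewrite /kept /hyb /indeg hv /=.
  have [fp1|nfp1] := eqVneq (f v) p1; first by exists p2; rewrite Ep2 fp1.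
  by exists p1; rewrite Ep1.
have := E_indeg_gt0 nvr; rewrite /indeg => /card_gt0P [u]; rewrite inE => Euv.
by exists u; rewrite /kept Euv (negbTE nhv).
Qed.

Lemma connect_kept_root f v : f \in choices E -> connect (kept E f) r v.
Proof.
move=> fE; have [n] := ubnP #|[set u | connect E u v]|; elim: n v => // n IHn v.
rewrite ltnS => ancestors_v; have [->//|nvr] := eqVneq v r.
have [u Kuv] := kept_parent fE nvr; have Euv := kept_subrel Kuv.
apply: connect_trans (connect1 Kuv); apply: IHn; apply: leq_trans ancestors_v.
apply: proper_card; apply/properP; split.
  by apply/subsetP => w; rewrite !inE => Ewu; exact: connect_trans Ewu (connect1 Euv).
by exists v; rewrite !inE ?connect0 // E_acyclic.
Qed.

Lemma updown_path_up_down Y s A D :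
  path [rel a b | E b a] s A -> path E (last s A) D -> uniq (s :: A ++ D) ->
  A ++ D != [::] -> s \in lab @: Y -> last s (A ++ D) \in lab @: Y ->
  updown_path E lab r Y (s :: A ++ D).
Proof.
move=> up_A down_D uniq_AD AD_nil sY lastY.
have up_steps : all (fun e => E e.2 e.1) (steps (s :: A)).
  by rewrite (steps_path [rel a b | E b a]).
have down_steps : all (fun e => E e.1 e.2) (steps (last s A :: D)) by rewrite steps_path.
have E_asym a b : E a b -> E b a = false.
  by move=> Eab; apply: negbTE; apply: contraNN (E_acyclic Eab) => /connect1.
split.
- exact: uniq_AD.
- by rewrite /= ltnS lt0n size_eq0.
- by rewrite /= sY.
- rewrite steps_cat all_cat; apply/andP; split.
    by apply: sub_all up_steps => e /= ->; rewrite orbT.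
  by apply: sub_all down_steps => e /= ->.
move=> i j ij; rewrite steps_cat size_cat => j_lt; rewrite !nth_cat.
have [i_up|i_down] := ltnP i (size (steps (s :: A))).
  have /allP/(_ _ (mem_nth (r, r) i_up)) := up_steps.
  by rewrite /along => /E_asym ->.
have j_down : size (steps (s :: A)) <= j by exact: leq_trans i_down (ltnW ij).
rewrite ltnNge j_down /=.
have j_lt' : j - size (steps (s :: A)) < size (steps (last s A :: D)).
  by rewrite ltn_subLR.
have /allP/(_ _ (mem_nth (r, r) j_lt')) := down_steps.
by rewrite /against => /E_asym ->; rewrite andbF.
Qed.

Definition lowest_common_ancestor (K : rel V) Y L :=
  (forall s, s \in Y -> connect K L (lab s)) /\
  (forall c, c != L -> connect K L c -> exists2 t, t \in Y & ~~ connect K c (lab t)).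

Lemma exists_lowest_common_ancestor f Y : f \in choices E ->
  exists L, lowest_common_ancestor (kept E f) Y L.
Proof.
move=> fE; set K := kept E f.
pose common := [pred c | [forall s in Y, connect K c (lab s)]].
have common_r : common r by apply/forall_inP => s _; exact: connect_kept_root.
pose depth c := #|[set u | connect K u c]|.
have [L /forall_inP LY deepest] := arg_maxnP depth common_r.
exists L; split=> [s sY|c ncL Lc]; first exact: LY.
apply/exists_inP; apply: contraT => /exists_inPn all_below.
have common_c : common c by apply/forall_inP => t tY; apply/negPn/all_below.
have K_ac : acyclic K := acyclic_sub E_acyclic (@kept_subrel _ E f).
have le_cL : depth c <= depth L := deepest c common_c.
suff : depth L < depth c by rewrite ltnNge le_cL.
apply/proper_card/properP; split.
  by apply/subsetP => w; rewrite !inE => wL; exact: connect_trans wL Lc.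
exists c; rewrite !inE ?connect0 //; apply: contraNN ncL => cL.
by rewrite (acyclic_connect_antisym K_ac cL Lc).
Qed.

Section KeptForest.
Variable f : {ffun V -> V}.
Hypothesis fE : f \in choices E.
Local Notation K := (kept E f).

Let K_pu : parent_unique K := kept_parent_unique E_indeg_le2 fE.
Let K_acyclic : acyclic K := acyclic_sub E_acyclic (@kept_subrel _ E f).

(* [s] and [t] hang below different children of [L], so the way up from [s]
   and the way down to [t] only meet at [L]. *)
Lemma kept_updown_path Y L c s t A D :
  K L c -> connect K c (lab s) -> ~~ connect K c (lab t) -> s \in Y -> t \in Y ->
  path [rel a b | K b a] (lab s) A -> last (lab s) A = L ->
  path K L D -> last L D = lab t -> A != [::] ->
  updown_path E lab r Y (lab s :: A ++ D).
Proof.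
move=> KLc cs nct sY tY up_A A_last down_D D_last A_nil.
apply: updown_path_up_down.
- by apply: sub_path up_A => a b /kept_subrel.
- by rewrite A_last; apply: sub_path down_D => a b /kept_subrel.
- have := acyclic_path_uniq K_acyclic down_D; rewrite cons_uniq => /andP [LD uniq_D].
  rewrite -cat_cons cat_uniq (acyclic_path_uniq (acyclic_rev K_acyclic) up_A).
  rewrite uniq_D andbT /=.
  apply/hasPn => w wD; apply/negP => wA.
  have := path_connect up_A wA; rewrite connect_rev /= => ws.
  have Lw : connect K L w by apply: (path_connect down_D); rewrite inE wD orbT.
  have nwL : w != L by apply: contraNneq LD => <-.
  have wt : connect K w (lab t) by rewrite -D_last; exact: path_connect_last down_D wD.
  have cw := connect_from_child K_pu K_acyclic KLc cs Lw nwL ws.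
  by move: nct; rewrite (connect_trans cw wt).
- by case: (A) A_nil.
- exact: imset_f.
- by rewrite last_cat A_last D_last imset_f.
Qed.

Lemma kept_edge_resE Y L u v s : lowest_common_ancestor K Y L ->
  v != L -> connect K L v -> s \in Y -> connect K v (lab s) -> K u v ->
  resE E lab r Y u v.
Proof.
move=> [LY lowL] nvL Lv sY vs Kuv.
have nsL : lab s != L.
  apply: contraNneq nvL => sL; rewrite sL in vs.
  by rewrite (acyclic_connect_antisym K_acyclic vs Lv).
have [c KLc cs] := connect_first_step (connect_trans Lv vs) nsL.
have ncL : c != L by apply: contraNneq (K_acyclic KLc) => ->.
have [t tY nct] := lowL c ncL (connect1 KLc).
have Lu := connect_parent K_pu Lv Kuv nvL.
(* climb from [lab s] through [v] and [u] up to [L], then descend to [lab t] *)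
have /connectP [p1 up_p1 p1_last] : connect [rel a b | K b a] (lab s) v.
  by rewrite connect_rev.
have /connectP [p2 up_p2 p2_last] : connect [rel a b | K b a] u L by rewrite connect_rev.
have /connectP [D down_D D_last] := LY t tY.
set A := p1 ++ u :: p2.
have up_A : path [rel a b | K b a] (lab s) A by rewrite cat_path up_p1 /= -p1_last Kuv.
have A_last : last (lab s) A = L by rewrite last_cat /= -p2_last.
apply/asboolP; split; first exact: kept_subrel Kuv.
exists (lab s :: A ++ D); split.
  apply: (kept_updown_path KLc cs nct sY tY up_A A_last down_D) => //.
  by rewrite -size_eq0 size_cat addnS.
by right; rewrite steps_cat mem_cat steps_cat mem_cat -p1_last /steps /= inE eqxx !orbT.
Qed.

End KeptForest.

Local Open Scope ring_scope.

Lemma mu_neq0 B : (mu B)%:R != 0 :> rat.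
Proof.
by have [g gB] := exists_choice B; rewrite pnatr_eq0 -lt0n; apply/card_gt0P; exists g.
Qed.

Section Restriction.
Variable B : rel V.
Hypothesis BE : subrel B E.

Definition restrict_choice f : {ffun V -> V} := [ffun v => if hyb B v then f v else v].

Lemma restrict_choice_in f : f \in choices E -> restrict_choice f \in choices B.
Proof.
move=> fE; rewrite inE; apply/forallP => v; rewrite ffunE.
case: (boolP (hyb B v)) => // hBv.
by have := choicesP fE v; rewrite (hyb_subrel BE hBv); exact: hyb_subrel_parent.
Qed.

Lemma kept_restrict_choice f u v : B u v -> kept E f u v -> kept B (restrict_choice f) u v.
Proof.
move=> Buv /andP [_ nf]; rewrite /kept Buv ffunE /=.
by case: (boolP (hyb B v)) => //= hBv; rewrite (hyb_subrel BE hBv) in nf.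
Qed.

Definition fiber g := [set f in choices E | restrict_choice f == g].

(* Resetting the choices at the hybrid nodes of [B] maps one fiber into another. *)
Lemma card_fiber_le g1 g2 : g1 \in choices B -> g2 \in choices B ->
  (#|fiber g1| <= #|fiber g2|)%N.
Proof.
move=> g1B g2B; pose reset f := [ffun v => if hyb B v then g2 v else f v].
have reset_inj : {in fiber g1 &, injective reset}.
  move=> f1 f2; rewrite !inE => /andP [_ /eqP f1g1] /andP [_ /eqP f2g1] /ffunP e12.
  apply/ffunP => v; have := e12 v; rewrite !ffunE; case: ifP => // hBv _.
  by move: f1g1 f2g1 => /ffunP /(_ v) + /ffunP /(_ v); rewrite !ffunE hBv => -> ->.
rewrite -(card_in_imset reset_inj); apply/subset_leq_card/subsetP => h /imsetP [f].
rewrite inE => /andP [fE _] ->{h}; rewrite !inE; apply/andP; split.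
  apply/forallP => v; rewrite ffunE; case: (boolP (hyb B v)) => [hBv|_].
    by rewrite (hyb_subrel BE hBv); have := choicesP g2B v; rewrite hBv; exact: BE.
  exact: choicesP fE v.
apply/eqP/ffunP => v; rewrite !ffunE; case: (boolP (hyb B v)) => // nhBv.
by have := choicesP g2B v; rewrite (negbTE nhBv) => /eqP.
Qed.

Lemma mean_restrict_choice (F : {ffun V -> V} -> rat) :
  (mu E)%:R^-1 * \sum_(f in choices E) F (restrict_choice f) =
  (mu B)%:R^-1 * \sum_(g in choices B) F g.
Proof.
have [g0 g0B] := exists_choice B.
have fiberE g : g \in choices B -> #|fiber g| = #|fiber g0|.
  by move=> gB; apply/eqP; rewrite eqn_leq !card_fiber_le.
have sumE (G : {ffun V -> V} -> rat) :
    \sum_(f in choices E) G (restrict_choice f) =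
    #|fiber g0|%:R * \sum_(g in choices B) G g.
  rewrite (partition_big restrict_choice (mem (choices B))) => [|f]; last first.
    exact: restrict_choice_in.
  rewrite mulr_sumr; apply: eq_bigr => g gB; rewrite -(fiberE g gB) mulr_natl -sumr_const.
  by apply: eq_big => [f|f /andP [_ /eqP ->]] //; rewrite /fiber inE.
have muE : (mu E)%:R = #|fiber g0|%:R * (mu B)%:R :> rat.
  by have := sumE (fun _ => 1); rewrite !sumr_const /mu => <-.
have fiber0 : #|fiber g0|%:R != 0 :> rat.
  by apply: contraNneq (mu_neq0 E) => fiber0; rewrite muE fiber0 mul0r.
by rewrite sumE muE invfM -mulrA mulrCA mulKf.
Qed.

End Restriction.

Lemma resE_subrel Y : subrel (resE E lab r Y) E.
Proof. by move=> u v /asboolP []. Qed.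

Lemma rho_restrict f x y S : f \in choices E -> pairs_off x y S ->
  let B := resE E lab r (x |: (y |: S)) in
  rho lab E f x y S = rho lab B (restrict_choice B f) x y S.
Proof.
move=> fE /and3P [/eqP S2 xS yS] B; set Y := x |: (y |: S).
have BE : subrel B E := @resE_subrel Y.
have xY : x \in Y by rewrite !inE eqxx.
have yY : y \in Y by rewrite !inE eqxx orbT.
have SY : S \subset Y by apply/subsetP => w wS; rewrite !inE wS !orbT.
have [z0 z0S] : exists z0, z0 \in S by apply/card_gt0P; rewrite S2.
have [L L_lca] := exists_lowest_common_ancestor Y fE.
have B_le2 v : (indeg B v <= 2)%N := leq_trans (indeg_subrel v BE) (E_indeg_le2 v).
have K1E : subrel (kept E f) E := @kept_subrel _ E f.
have K2E : subrel (kept B (restrict_choice B f)) E by move=> u v /kept_subrel /BE.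
have K1_pu := kept_parent_unique E_indeg_le2 fE.
have K2_pu := kept_parent_unique B_le2 (restrict_choice_in BE fE).
rewrite /rho !has_splitE.
rewrite (splits_transfer xY yY SY E_acyclic K1E K2E K1_pu K2_pu L_lca.1 _ z0S) //.
move=> u v nvL Lv [s sY vs] K1uv; apply: (kept_restrict_choice BE _ K1uv).
exact: (kept_edge_resE fE L_lca nvL Lv sY vs K1uv).
Qed.

Lemma rho_tildeE x y S : pairs_off x y S ->
  rho_tilde E lab r x y S = (mu E)%:R^-1 * \sum_(f in choices E) rho lab E f x y S.
Proof.
move=> xyS; rewrite /rho_tilde -(mean_restrict_choice (@resE_subrel _)).
by congr (_ * _); apply: eq_bigr => f fE; rewrite rho_restrict.
Qed.

Lemma mean_const (c : rat) : (mu E)%:R^-1 * \sum_(f in choices E) c = c.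
Proof. by rewrite sumr_const -[c *+ _]mulr_natr mulrCA mulVf ?mulr1 ?mu_neq0. Qed.

Lemma dN_mean x y : dN E lab r x y = (mu E)%:R^-1 * \sum_(f in choices E) dT E lab f x y.
Proof.
rewrite /dN /dT; have [_|nxy] := eqVneq x y; first by rewrite big1 ?mulr0.
rewrite big_split /= mulrDr mean_const exchange_big mulr_sumr; congr (_ + _).
apply: eq_bigr => S xyS; rewrite rho_tildeE // -mulr_sumr mulrCA.
by congr (_ * _); rewrite mulr_sumr.
Qed.

End Network.

Lemma rooted_network_indeg (X V : finType) (E : rel V) (lab : X -> V) r v :
  is_rooted_network E lab r -> v != r -> (indeg E v == 1) || (indeg E v == 2).
Proof.
move=> [_ _ [_ leaves] inner _] nvr; case: (boolP (v \in codom lab)) => [|not_leaf].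
  by rewrite leaves => /andP [-> _].
by case/orP: (inner v nvr not_leaf) => /andP [-> _]; rewrite ?orbT.
Qed.

Local Open Scope ring_scope.

Theorem theorem3p3 (X V : finType) (E : rel V) (lab : X -> V) (r : V) :
  is_rooted_network E lab r -> (4 <= #|X|)%N ->
  forall x y : X,
    dN E lab r x y =
    (mu E)%:R^-1 * (\sum_(f in choices E) dT E lab f x y).
Proof.
(* the identity holds quartet by quartet *)
move=> N _ x y; have [E_acyclic [r_in0 _] _ _ _] := N.
apply: dN_mean E_acyclic _ _ x y => [v|v nvr].
  have [->|/(rooted_network_indeg N)] := eqVneq v r; first by rewrite r_in0.
  by case/orP => /eqP ->.
by case/orP: (rooted_network_indeg N nvr) => /eqP ->.
Qed.
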